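(* Let $\alpha=1/4$, so each of the four user types $(x,e)\in\{1/4,3/4\}^2$ arrives with mass $1/4$ per period. Let $q_1^*,q_3^*\in(0,1)$ with $q_1^*\neq q_3^*$ be the status quo qualities of segments $x=1/4$ and $x=3/4$. Then there exist treatment qualities $q_1,q_3\in(0,1)$ such that (i) the experimental ARQ increases: $\frac{q_3}{1-q_3^*}+\frac{q_1}{1-q_1^*}>\frac{q_3^*}{1-q_3^*}+\frac{q_1^*}{1-q_1^*}$; (ii) the experimental churn rate decreases: $\dfrac{\frac{1-q_3}{1-q_3^*}+\frac{1-q_1}{1-q_1^*}}{2\left(\frac{4}{3(1-q_3^* )}+\frac{4}{3(1-q_1^* )}\right)}<\dfrac{1}{\frac{4}{3(1-q_3^* )}+\frac{4}{3(1-q_1^* )}}$; and (iii) the treatment's steady-state total user population is smaller: $\frac{4}{3(1-q_3)}+\frac{4}{3(1-q_1)}<\frac{4}{3(1-q_3^* )}+\frac{4}{3(1-q_1^* )}$.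
   Context: Model: a type-$(x,e)$ user churns each period with probability $(1-q(x))(1-e)$, where $q(x)\in(0,1)$ is the algorithm's recommendation quality for segment $x$; the steady-state mass of type $(x,e)$ is $F(x,e)/((1-q(x))(1-e))$, here with $F\equiv 1/4$. The experimental ARQ and churn rate of a treatment are computed by applying the treatment qualities $q_1=q(1/4)$, $q_3=q(3/4)$ for one period to the status quo's steady-state population (status quo qualities $q_1^*,q_3^*$); inequalities (i)–(iii) are these comparisons written out (in (i) both sides are the ARQ numerators over the common positive denominator $\frac{4}{3(1-q_3^* )}+\frac{4}{3(1-q_1^* )}$, after cancelling the factor $4/3$). *)

From Stdlib Require Import Reals.
Open Scope R_scope.

Definition total_pop (q3 q1 : R) : R := 4 / (3 * (1 - q3)) + 4 / (3 * (1 - q1)).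

(* Write a = 1 - q3*, b = 1 - q1* for the status quo survival factors and
   A = 1 - q3, B = 1 - q1 for the treatment ones.  Conditions (i) and (ii) both
   say A/a + B/b < 2, i.e. (A, B) lies strictly below the line through (a, b)
   with normal (1/a, 1/b), while (iii) says 1/A + 1/B < 1/a + 1/b.  The
   gradient of 1/A + 1/B at (a, b) is not parallel to (1/a, 1/b) when a <> b,
   so a small move from (a, b) that raises the smaller factor and lowers the
   larger one decreases both quantities. *)

From Stdlib Require Import Reals Psatz.
Open Scope R_scope.

Lemma perturbed_reciprocal_sum_lt (a b s r : R) :
  0 < a -> 0 < b -> 0 < 1 + s -> 0 < 1 - r ->
  r * a * (1 + s) < s * b * (1 - r) ->
  1 / (a * (1 + s)) + 1 / (b * (1 - r)) < 1 / a + 1 / b.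
Proof.
  intros ha hb hs hr hlt.
  apply Rlt_0_minus.
  replace (1 / a + 1 / b - (1 / (a * (1 + s)) + 1 / (b * (1 - r))))
    with ((s * b * (1 - r) - r * a * (1 + s)) / (a * b * (1 + s) * (1 - r)))
    by (field; lra).
  apply Rdiv_lt_0_compat; [lra |].
  repeat apply Rmult_lt_0_compat; lra.
Qed.

Lemma exists_below_line_smaller_reciprocal_sum (a b : R) :
  0 < a < b -> b < 1 ->
  exists A B : R, 0 < A < 1 /\ 0 < B < 1 /\
    A / a + B / b < 2 /\ 1 / A + 1 / B < 1 / a + 1 / b.
Proof.
  intros [ha hab] hb.
  set (d := (b - a) / (a + b)).
  set (s := a * d / (2 * (a + b))).
  set (r := d / 4).
  assert (hd : 0 < d < 1).
  { unfold d; split; [apply Rdiv_lt_0_compat; lra |].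
    apply (Rmult_lt_reg_r (a + b)); [lra |]. field_simplify; lra. }
  assert (hs : 0 < s) by (unfold s; apply Rdiv_lt_0_compat; nra).
  assert (hsr : s < r).
  { unfold s, r. apply (Rmult_lt_reg_r (4 * (a + b))); [lra |].
    field_simplify; nra. }
  assert (htrade : r * a * (1 + s) < s * b * (1 - r)).
  { apply Rlt_0_minus.
    replace (s * b * (1 - r) - r * a * (1 + s))
      with (a * (b - a) ^ 2 / (8 * (a + b) ^ 2))
      by (unfold s, r, d; field; lra).
    apply Rdiv_lt_0_compat.
    - apply Rmult_lt_0_compat; [lra | apply pow_lt; lra].
    - apply Rmult_lt_0_compat; [lra | apply pow_lt; lra]. }
  assert (hA1 : a * (1 + s) < 1).
  { assert (has : a * s * (2 * (a + b) ^ 2) = a ^ 2 * (b - a))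
      by (unfold s, d; field; lra).
    assert (hsq : a ^ 2 < (a + b) ^ 2) by nra.
    assert (hab2 : a ^ 2 * (b - a) < (a + b) ^ 2 * (1 - a))
      by (apply Rmult_le_0_lt_compat; nra).
    nra. }
  exists (a * (1 + s)), (b * (1 - r)).
  assert (hr : 0 < r < 1) by (unfold r; lra).
  split; [split; [apply Rmult_lt_0_compat | exact hA1]; lra |].
  split; [split; [apply Rmult_lt_0_compat | nra]; lra |].
  split.
  - replace (a * (1 + s) / a + b * (1 - r) / b) with (2 + s - r) by (field; lra).
    lra.
  - apply perturbed_reciprocal_sum_lt; lra.
Qed.

Lemma exists_below_line_smaller_reciprocal_sum_neq (a b : R) :
  0 < a < 1 -> 0 < b < 1 -> a <> b ->
  exists A B : R, 0 < A < 1 /\ 0 < B < 1 /\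
    A / a + B / b < 2 /\ 1 / A + 1 / B < 1 / a + 1 / b.
Proof.
  intros ha hb hab.
  destruct (Rlt_or_le a b) as [hlt | hle].
  - apply exists_below_line_smaller_reciprocal_sum; lra.
  - destruct (exists_below_line_smaller_reciprocal_sum b a)
      as (B & A & hB & hA & hline & hrec); [lra | lra |].
    exists A, B; repeat split; lra.
Qed.

Lemma sum_div_gt_of_compl_sum_lt (q1s q3s q1 q3 : R) :
  q1s < 1 -> q3s < 1 ->
  (1 - q3) / (1 - q3s) + (1 - q1) / (1 - q1s) < 2 ->
  q3 / (1 - q3s) + q1 / (1 - q1s) > q3s / (1 - q3s) + q1s / (1 - q1s).
Proof.
  intros h1 h3 hline.
  assert (hsplit : forall q qs, qs < 1 ->
            q / (1 - qs) = qs / (1 - qs) + 1 - (1 - q) / (1 - qs))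
    by (intros q qs hqs; field; lra).
  rewrite (hsplit q3 q3s), (hsplit q1 q1s) by lra.
  lra.
Qed.

Lemma div_double_lt_recip (x p : R) : 0 < p -> x < 2 -> x / (2 * p) < 1 / p.
Proof.
  intros hp hx.
  replace (x / (2 * p)) with (x / 2 * (1 / p)) by (field; lra).
  rewrite <- (Rmult_1_l (1 / p)) at 2.
  apply Rmult_lt_compat_r; [apply Rdiv_lt_0_compat |]; lra.
Qed.

Lemma total_pop_reciprocal (q3 q1 : R) :
  q3 < 1 -> q1 < 1 -> total_pop q3 q1 = 4 / 3 * (1 / (1 - q3) + 1 / (1 - q1)).
Proof. intros h3 h1. unfold total_pop. field. lra. Qed.

Lemma total_pop_gt0 (q3 q1 : R) : q3 < 1 -> q1 < 1 -> 0 < total_pop q3 q1.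
Proof.
  intros h3 h1. rewrite total_pop_reciprocal by lra.
  assert (0 < 1 / (1 - q3)) by (apply Rdiv_lt_0_compat; lra).
  assert (0 < 1 / (1 - q1)) by (apply Rdiv_lt_0_compat; lra).
  lra.
Qed.

Theorem corollary2 (q1s q3s : R) :
  0 < q1s < 1 -> 0 < q3s < 1 -> q1s <> q3s ->
  exists q1 q3 : R,
    0 < q1 < 1 /\ 0 < q3 < 1 /\
    (* (i) experimental ARQ increases *)
    q3 / (1 - q3s) + q1 / (1 - q1s) > q3s / (1 - q3s) + q1s / (1 - q1s) /\
    (* (ii) experimental churn rate decreases *)
    ((1 - q3) / (1 - q3s) + (1 - q1) / (1 - q1s)) / (2 * total_pop q3s q1s)
      < 1 / total_pop q3s q1s /\
    (* (iii) treatment steady-state population smaller *)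
    total_pop q3 q1 < total_pop q3s q1s.
Proof.
  intros h1 h3 hne.
  destruct (exists_below_line_smaller_reciprocal_sum_neq (1 - q3s) (1 - q1s))
    as (A & B & hA & hB & hline & hrec); [lra | lra | lra |].
  exists (1 - B), (1 - A).
  replace A with (1 - (1 - A)) in hline, hrec by ring.
  replace B with (1 - (1 - B)) in hline, hrec by ring.
  split; [lra |]. split; [lra |]. split; [| split].
  - apply sum_div_gt_of_compl_sum_lt; lra.
  - apply div_double_lt_recip; [apply total_pop_gt0; lra | exact hline].
  - rewrite !total_pop_reciprocal by lra. lra.
Qed.
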